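(* For any $f\in\mathcal{C}(I)$ and integers $m,n\ge0$, $$\operatorname{dist}\big(f,\mathcal{R}^\alpha_{mn}(I)\big)\le\operatorname{dist}\big(f,\mathcal{R}_{mn}(I)\big)+\frac{|\alpha|_\infty}{1-|\alpha|_\infty}\|Id-L\|\Big(\operatorname{dist}\big(f,\mathcal{R}_{mn}(I)\big)+\|f\|_\infty\Big).$$
   Context: $I=[x_0,x_N]$ is a compact interval, $\mathcal{C}(I)$ the real continuous functions with sup norm, $\Delta=\{x_0<x_1<\dots<x_N\}$, $N\ge2$, $I_i=[x_{i-1},x_i]$, $L_i(x)=a_ix+b_i$ the affine map of $I$ onto $I_i$ with $L_i(x_0)=x_{i-1}$, $L_i(x_N)=x_i$; $\alpha\in(-1,1)^N$, $|\alpha|_\infty=\max_i|\alpha_i|$. For $f,b\in\mathcal{C}(I)$ with $b(x_0)=f(x_0)$, $b(x_N)=f(x_N)$, $f^\alpha_{\Delta,b}$ is the unique $g\in\mathcal{C}(I)$ with $g(x)=f(x)+\alpha_i(g-b)(L_i^{-1}(x))$ for $x\in I_i$. $L:\mathcal{C}(I)\to\mathcal{C}(I)$ is bounded linear with $(Lf)(x_0)=f(x_0)$, $(Lf)(x_N)=f(x_N)$, and $\mathcal{F}^\alpha_{\Delta,L}(f)=f^\alpha_{\Delta,Lf}$. $\mathcal{P}_k(I)$ is the space of real algebraic polynomials of degree $\le k$; $\mathcal{R}_{mn}(I)=\{p/q:p\in\mathcal{P}_m(I),q\in\mathcal{P}_n(I),q>0\text{ on }I\}$; $\mathcal{R}^\alpha_{mn}(I)=\mathcal{F}^\alpha_{\Delta,L}(\mathcal{R}_{mn}(I))$;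 $\operatorname{dist}(f,S)=\inf\{\|f-s\|_\infty:s\in S\}$. *)

From Stdlib Require Import Reals Lra Lia ClassicalEpsilon.
Open Scope R_scope.

(* Supremum of a set of reals (0 if empty or unbounded above). *)
Definition Rsup (E : R -> Prop) : R :=
  match excluded_middle_informative (bound E /\ exists y, E y) with
  | left H => proj1_sig (completeness E (proj1 H) (proj2 H))
  | right _ => 0
  end.

(* Infimum of a set of reals (0 if empty or unbounded below). *)
Definition Rinf (E : R -> Prop) : R := - Rsup (fun y => E (- y)).

(* Functions on I = [a,b] are represented by R -> R; only values on I matter. *)
Definition in_I (a b t : R) : Prop := a <= t <= b.

Definition cont_on (a b : R) (g : R -> R) : Prop :=
  forall t, in_I a b t -> forall eps, 0 < eps ->
    exists delta, 0 < delta /\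
      forall s, in_I a b s -> Rabs (s - t) < delta -> Rabs (g s - g t) < eps.

Definition supnorm (a b : R) (g : R -> R) : R :=
  Rsup (fun y => exists t, in_I a b t /\ y = Rabs (g t)).

Definition distS (a b : R) (f : R -> R) (S : (R -> R) -> Prop) : R :=
  Rinf (fun y => exists s, S s /\ y = supnorm a b (fun t => f t - s t)).

Definition opnorm_IdmL (a b : R) (L : (R -> R) -> (R -> R)) : R :=
  Rsup (fun y => exists g, cont_on a b g /\ supnorm a b g <= 1 /\
                   y = supnorm a b (fun t => g t - L g t)).

Definition admissible_L (a b : R) (L : (R -> R) -> (R -> R)) : Prop :=
  (forall g, cont_on a b g -> cont_on a b (L g)) /\
  (forall g h, cont_on a b g -> cont_on a b h ->
     (forall t, in_I a b t -> g t = h t) ->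
     forall t, in_I a b t -> L g t = L h t) /\
  (forall g h, cont_on a b g -> cont_on a b h ->
     forall t, in_I a b t -> L (fun s => g s + h s) t = L g t + L h t) /\
  (forall c g, cont_on a b g ->
     forall t, in_I a b t -> L (fun s => c * g s) t = c * L g t) /\
  (exists K, forall g, cont_on a b g -> supnorm a b (L g) <= K * supnorm a b g) /\
  (forall g, cont_on a b g -> L g a = g a /\ L g b = g b).

Definition is_poly (k : nat) (p : R -> R) : Prop :=
  exists c : nat -> R, forall t, p t = sum_f_R0 (fun j => c j * t ^ j) k.

Definition Rat (a b : R) (m n : nat) (r : R -> R) : Prop :=
  exists p q, is_poly m p /\ is_poly n q /\
    (forall t, in_I a b t -> 0 < q t) /\
    (forall t, in_I a b t -> r t = p t / q t).

Definition partition (N : nat) (x : nat -> R) : Prop :=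
  forall i, (i < N)%nat -> x i < x (S i).

Definition alpha_ok (N : nat) (alpha : nat -> R) : Prop :=
  forall i, (1 <= i <= N)%nat -> -1 < alpha i < 1.

Fixpoint alpha_max (alpha : nat -> R) (k : nat) : R :=
  match k with
  | O => 0
  | S j => Rmax (alpha_max alpha j) (Rabs (alpha (S j)))
  end.

(* inverse of the affine map L_i : I -> I_i, L_i(x_0)=x_{i-1}, L_i(x_N)=x_i *)
Definition Linv (N : nat) (x : nat -> R) (i : nat) (y : R) : R :=
  x 0%nat + (y - x (pred i)) * (x N - x 0%nat) / (x i - x (pred i)).

Definition is_fractal (N : nat) (x : nat -> R) (alpha : nat -> R)
    (f bb g : R -> R) : Prop :=
  cont_on (x 0%nat) (x N) g /\
  forall i, (1 <= i <= N)%nat -> forall y, x (pred i) <= y <= x i ->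
    g y = f y + alpha i * (g (Linv N x i y) - bb (Linv N x i y)).

Definition Rat_alpha (N : nat) (x : nat -> R) (alpha : nat -> R)
    (L : (R -> R) -> (R -> R)) (m n : nat) (g : R -> R) : Prop :=
  exists r, Rat (x 0%nat) (x N) m n r /\ is_fractal N x alpha r (L r) g.

(* Write a = |alpha|_inf < 1 and ||Id - L|| for the operator norm.  For a rational
   r, its fractal perturbation g = r^alpha_{Delta, L r} is r + h, where h is the
   fixed point of h = S (h + (r - L r)) and (S w)(y) = alpha_i w(L_i^{-1} y) on the
   piece I_i.  The operator S has norm a on functions vanishing at the endpoints,
   so the Picard iterates converge geometrically and uniformly; this gives
   existence, continuity and ||g - r|| <= a/(1-a) ||r - L r||
   <= a/(1-a) ||Id - L|| ||r|| <= a/(1-a) ||Id - L|| (||f - r|| + ||f||).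
   By the triangle inequality every rational approximation error ||f - r|| thus
   dominates, up to that affine correction, the distance from f to the fractal
   rational class, and taking the infimum over r gives the theorem. *)

From Stdlib Require Import Reals Lra Lia ClassicalEpsilon.
Open Scope R_scope.

Lemma continuity_pt_intro (g : R -> R) (t : R) :
  (forall eps, 0 < eps -> exists d, 0 < d /\
     forall s, Rabs (s - t) < d -> Rabs (g s - g t) < eps) ->
  continuity_pt g t.
Proof.
  intros H eps Heps. destruct (H eps Heps) as [d [Hd Hs]].
  exists d; split; [lra|]. intros s [_ Hst]. exact (Hs s Hst).
Qed.

Lemma continuity_pt_elim (g : R -> R) (t : R) : continuity_pt g t ->
  forall eps, 0 < eps -> exists d, 0 < d /\
    forall s, Rabs (s - t) < d -> Rabs (g s - g t) < eps.
Proof.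
  intros H eps Heps. destruct (H eps Heps) as [d [Hd Hs]].
  exists d; split; [lra|]. intros s Hst.
  destruct (Req_dec s t) as [->|Hne].
  - unfold Rminus; rewrite Rplus_opp_r, Rabs_R0; lra.
  - apply (Hs s). split; [split; [exact I | congruence] | exact Hst].
Qed.

Lemma continuity_ext (g h : R -> R) :
  (forall y, g y = h y) -> continuity g -> continuity h.
Proof.
  intros E Hg t. apply (continuity_pt_locally_ext g h 1 t); [lra | auto | apply Hg].
Qed.

Lemma continuity_cst (c : R) : continuity (fun _ => c).
Proof. apply continuity_const. intros s t; reflexivity. Qed.

Lemma continuity_plus_fun (g h : R -> R) :
  continuity g -> continuity h -> continuity (fun y => g y + h y).
Proof. intros. apply (continuity_ext (g + h)%F); [reflexivity | now apply continuity_plus]. Qed.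

Lemma continuity_minus_fun (g h : R -> R) :
  continuity g -> continuity h -> continuity (fun y => g y - h y).
Proof. intros. apply (continuity_ext (g - h)%F); [reflexivity | now apply continuity_minus]. Qed.

Lemma continuity_mult_fun (g h : R -> R) :
  continuity g -> continuity h -> continuity (fun y => g y * h y).
Proof. intros. apply (continuity_ext (g * h)%F); [reflexivity | now apply continuity_mult]. Qed.

Lemma continuity_comp_fun (g h : R -> R) :
  continuity g -> continuity h -> continuity (fun y => h (g y)).
Proof. intros. apply (continuity_ext (comp h g)); [reflexivity | now apply continuity_comp]. Qed.

Lemma is_poly_continuity (k : nat) (p : R -> R) : is_poly k p -> continuity p.
Proof.
  intros [c Hc]. apply (continuity_ext (fun t => sum_f_R0 (fun j => c j * t ^ j) k));
    [intros; symmetry; apply Hc |]. clear Hc.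
  assert (Hmon : forall j, continuity (fun t => c j * t ^ j)).
  { intro j. apply continuity_mult_fun; [apply continuity_cst |].
    apply derivable_continuous, derivable_pow. }
  induction k as [|k IHk]; cbn [sum_f_R0]; [apply Hmon | now apply continuity_plus_fun].
Qed.

(** * Continuity on a compact interval, via extension by constants *)

(* [clamp a b] is the 1-Lipschitz retraction of the line onto [a,b]; composing
   with it extends a function on [a,b] to the line by its endpoint values. *)
Definition clamp (a b t : R) : R := Rmax a (Rmin b t).

Lemma clamp_in (a b t : R) : a <= b -> in_I a b (clamp a b t).
Proof. intros. unfold clamp, in_I, Rmax, Rmin. repeat destruct Rle_dec; lra. Qed.

Lemma clamp_id (a b t : R) : in_I a b t -> clamp a b t = t.
Proof. unfold clamp, in_I, Rmax, Rmin. intros. repeat destruct Rle_dec; lra. Qed.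

Lemma clamp_lipschitz (a b s t : R) :
  a <= b -> Rabs (clamp a b s - clamp a b t) <= Rabs (s - t).
Proof.
  intros. unfold clamp, Rmax, Rmin.
  repeat destruct Rle_dec; unfold Rabs; repeat destruct Rcase_abs; lra.
Qed.

Lemma clamp_left (a b t : R) : a <= b -> t <= a -> clamp a b t = a.
Proof. intros. unfold clamp, Rmax, Rmin. repeat destruct Rle_dec; lra. Qed.

Lemma clamp_right (a b t : R) : a <= b -> b <= t -> clamp a b t = b.
Proof. intros. unfold clamp, Rmax, Rmin. repeat destruct Rle_dec; lra. Qed.

(* Continuity on [a,b] is continuity of the clamped extension; this transfers
   the closure properties of [continuity] to [cont_on]. *)
Lemma cont_on_iff_clamp (a b : R) (g : R -> R) :
  a <= b -> cont_on a b g <-> continuity (fun t => g (clamp a b t)).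
Proof.
  intros Hab; split.
  - intros H t. apply continuity_pt_intro. intros eps Heps.
    destruct (H (clamp a b t) (clamp_in a b t Hab) eps Heps) as [d [Hd Hs]].
    exists d; split; [exact Hd |]. intros s Hst. apply Hs; [now apply clamp_in |].
    eapply Rle_lt_trans; [apply clamp_lipschitz; exact Hab | exact Hst].
  - intros H t Ht eps Heps.
    destruct (continuity_pt_elim _ _ (H t) eps Heps) as [d [Hd Hs]].
    exists d; split; [exact Hd |]. intros s Hs1 Hst.
    specialize (Hs s Hst). now rewrite !clamp_id in Hs.
Qed.

Lemma continuity_cont_on (a b : R) (g : R -> R) : continuity g -> cont_on a b g.
Proof.
  intros H t _ eps Heps. destruct (continuity_pt_elim _ _ (H t) eps Heps) as [d [Hd Hs]].
  exists d; split; auto.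
Qed.

Lemma cont_on_plus (a b : R) (g h : R -> R) : a <= b ->
  cont_on a b g -> cont_on a b h -> cont_on a b (fun t => g t + h t).
Proof.
  intros Hab Hg Hh. apply cont_on_iff_clamp; [exact Hab |].
  apply (continuity_plus_fun (fun t => g (clamp a b t)) (fun t => h (clamp a b t)));
    now apply cont_on_iff_clamp.
Qed.

Lemma cont_on_minus (a b : R) (g h : R -> R) : a <= b ->
  cont_on a b g -> cont_on a b h -> cont_on a b (fun t => g t - h t).
Proof.
  intros Hab Hg Hh. apply cont_on_iff_clamp; [exact Hab |].
  apply (continuity_minus_fun (fun t => g (clamp a b t)) (fun t => h (clamp a b t)));
    now apply cont_on_iff_clamp.
Qed.

Lemma cont_on_scal (a b k : R) (g : R -> R) : a <= b ->
  cont_on a b g -> cont_on a b (fun t => k * g t).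
Proof.
  intros Hab Hg. apply cont_on_iff_clamp; [exact Hab |].
  apply (continuity_mult_fun (fun _ => k) (fun t => g (clamp a b t)));
    [apply continuity_cst | now apply cont_on_iff_clamp].
Qed.

Lemma cont_on_bounded (a b : R) (g : R -> R) : a <= b -> cont_on a b g ->
  exists M, forall t, in_I a b t -> Rabs (g t) <= M.
Proof.
  intros Hab Hg.
  destruct (continuity_ab_maj (fun t => Rabs (g (clamp a b t))) a b Hab) as [c [Hc _]].
  { intros t _. apply continuity_comp_fun; [| apply Rcontinuity_abs].
    now apply cont_on_iff_clamp. }
  exists (Rabs (g (clamp a b c))). intros t Ht.
  specialize (Hc t Ht). cbv beta in Hc. now rewrite clamp_id in Hc.
Qed.

Lemma Rat_cont_on (a b : R) (m n : nat) (r : R -> R) : Rat a b m n r -> cont_on a b r.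
Proof.
  intros [p [q [Hp [Hq [Hpos Hr]]]]] t Ht eps Heps.
  assert (Hpq : continuity_pt (p / q)%F t).
  { apply continuity_pt_div;
      [apply (is_poly_continuity m p Hp) | apply (is_poly_continuity n q Hq) |].
    specialize (Hpos t Ht); lra. }
  destruct (continuity_pt_elim _ _ Hpq eps Heps) as [d [Hd Hs]].
  exists d; split; [exact Hd |]. intros s Hs1 Hst. rewrite !Hr by assumption. now apply Hs.
Qed.

Lemma Rsup_ub (E : R -> Prop) (y : R) : bound E -> E y -> y <= Rsup E.
Proof.
  intros Hb Hy. unfold Rsup. destruct excluded_middle_informative as [H|H].
  - destruct (completeness E (proj1 H) (proj2 H)) as [s [Hs ?]]. now apply Hs.
  - exfalso. apply H. split; eauto.
Qed.

Lemma Rsup_lub (E : R -> Prop) (M : R) :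
  (exists y, E y) -> (forall y, E y -> y <= M) -> Rsup E <= M.
Proof.
  intros Hne HM. unfold Rsup. destruct excluded_middle_informative as [H|H].
  - destruct (completeness E (proj1 H) (proj2 H)) as [s [? Hs]]. apply Hs. exact HM.
  - exfalso. apply H. split; [exists M; exact HM | exact Hne].
Qed.

Lemma Rsup_ge0 (E : R -> Prop) : (forall y, E y -> 0 <= y) -> 0 <= Rsup E.
Proof.
  intros H. unfold Rsup. destruct excluded_middle_informative as [Hx|Hx]; [|lra].
  destruct (completeness E (proj1 Hx) (proj2 Hx)) as [s [Hs ?]].
  destruct (proj2 Hx) as [y Hy]. apply Rle_trans with y; auto.
Qed.

Lemma Rinf_lb (E : R -> Prop) (m y : R) : (forall z, E z -> m <= z) -> E y -> Rinf E <= y.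
Proof.
  intros Hm Hy. unfold Rinf. cut (- y <= Rsup (fun z => E (- z))); [lra |].
  apply Rsup_ub.
  - exists (- m). intros z Hz. specialize (Hm _ Hz); lra.
  - now rewrite Ropp_involutive.
Qed.

Lemma Rinf_glb (E : R -> Prop) (m : R) :
  (exists y, E y) -> (forall z, E z -> m <= z) -> m <= Rinf E.
Proof.
  intros [y Hy] Hm. unfold Rinf. cut (Rsup (fun z => E (- z)) <= - m); [lra |].
  apply Rsup_lub.
  - exists (- y). now rewrite Ropp_involutive.
  - intros z Hz. specialize (Hm _ Hz); lra.
Qed.

Lemma supnorm_ge0 (a b : R) (g : R -> R) : 0 <= supnorm a b g.
Proof. apply Rsup_ge0. intros y [s [_ ->]]. apply Rabs_pos. Qed.

Lemma supnorm_lub (a b M : R) (g : R -> R) :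
  a <= b -> (forall t, in_I a b t -> Rabs (g t) <= M) -> supnorm a b g <= M.
Proof.
  intros Hab HM. apply Rsup_lub.
  - exists (Rabs (g a)), a. split; [unfold in_I; lra | reflexivity].
  - intros y [s [Hs ->]]. auto.
Qed.

Lemma supnorm_ub (a b t : R) (g : R -> R) :
  a <= b -> cont_on a b g -> in_I a b t -> Rabs (g t) <= supnorm a b g.
Proof.
  intros Hab Hg Ht. destruct (cont_on_bounded a b g Hab Hg) as [M HM].
  apply Rsup_ub; [| eauto]. exists M. intros y [s [Hs ->]]. auto.
Qed.

Lemma supnorm_le_scal (a b k : R) (g h : R -> R) : a <= b -> 0 <= k -> cont_on a b g ->
  (forall t, in_I a b t -> Rabs (h t) <= k * Rabs (g t)) ->
  supnorm a b h <= k * supnorm a b g.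
Proof.
  intros Hab Hk Hg Hhg. apply supnorm_lub; [exact Hab |]. intros t Ht.
  eapply Rle_trans; [apply Hhg, Ht |].
  apply Rmult_le_compat_l; [exact Hk | now apply supnorm_ub].
Qed.

(** * Uniform limits of geometrically converging sequences of functions *)

Lemma limit_dist_le (U : nat -> R) (l c B : R) (n : nat) :
  Un_cv U l -> (forall m, (n <= m)%nat -> Rabs (U m - c) <= B) -> Rabs (l - c) <= B.
Proof.
  intros Hl Hb. destruct (Rle_dec (Rabs (l - c)) B) as [|Hgt]; [assumption | exfalso].
  destruct (Hl (Rabs (l - c) - B) ltac:(lra)) as [M HM].
  specialize (HM (Nat.max M n) ltac:(lia)). specialize (Hb (Nat.max M n) ltac:(lia)).
  unfold Rdist in HM. rewrite Rabs_minus_sym in HM.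
  pose proof (Rabs_triang (l - U (Nat.max M n)) (U (Nat.max M n) - c)) as Htri.
  replace (l - U (Nat.max M n) + (U (Nat.max M n) - c)) with (l - c) in Htri by ring.
  lra.
Qed.

Lemma geometric_small (q K : R) : 0 <= q < 1 ->
  forall eps, 0 < eps -> exists M, forall n, (M <= n)%nat -> q ^ n * K < eps.
Proof.
  intros Hq eps Heps.
  set (e := eps / (Rabs K + 1)).
  assert (He : 0 < e) by (apply Rdiv_lt_0_compat; [exact Heps | pose proof (Rabs_pos K); lra]).
  assert (Hee : e * (Rabs K + 1) = eps) by (unfold e; field; pose proof (Rabs_pos K); lra).
  destruct (pow_lt_1_zero q ltac:(rewrite Rabs_right; lra) e He) as [M HM].
  exists M. intros n Hn. specialize (HM n Hn).
  pose proof (pow_le q n (proj1 Hq)) as Hqn.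
  rewrite Rabs_right in HM by lra.
  pose proof (Rle_abs K). pose proof (Rabs_pos K). nra.
Qed.

Section GeometricLimit.

Variables (P : nat -> R -> R) (q c : R).
Hypothesis Hq : 0 <= q < 1.
Hypothesis Hstep : forall k y, Rabs (P (S k) y - P k y) <= q ^ k * c.

Lemma geometric_tail (n p : nat) (y : R) :
  Rabs (P (n + p) y - P n y) <= (q ^ n - q ^ (n + p)) * c / (1 - q).
Proof.
  induction p as [|p IHp].
  - rewrite Nat.add_0_r, !Rminus_diag, Rabs_R0. unfold Rdiv; lra.
  - replace (n + S p)%nat with (S (n + p)) by lia.
    pose proof (Rabs_triang (P (S (n + p)) y - P (n + p)%nat y) (P (n + p)%nat y - P n y))
      as Htri.
    replace (P (S (n + p)) y - P (n + p)%nat y + (P (n + p)%nat y - P n y))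
      with (P (S (n + p)) y - P n y) in Htri by ring.
    pose proof (Hstep (n + p) y).
    assert (Hid : q ^ (n + p) * c + (q ^ n - q ^ (n + p)) * c / (1 - q)
                  = (q ^ n - q ^ S (n + p)) * c / (1 - q)) by (simpl; field; lra).
    lra.
Qed.

Lemma geometric_cauchy_bound (n m : nat) (y : R) :
  (n <= m)%nat -> Rabs (P m y - P n y) <= q ^ n * c / (1 - q).
Proof.
  intros Hnm. replace m with (n + (m - n))%nat by lia.
  eapply Rle_trans; [apply geometric_tail |].
  assert (Hc : 0 <= c).
  { pose proof (Hstep 0 y) as H0. pose proof (Rabs_pos (P 1%nat y - P 0%nat y)).
    simpl in H0. lra. }
  pose proof (pow_le q (n + (m - n)) (proj1 Hq)).
  unfold Rdiv. apply Rmult_le_compat_r; [left; apply Rinv_0_lt_compat; lra | nra].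
Qed.

Lemma geometric_uniform_limit : (forall k, continuity (P k)) ->
  exists h, continuity h /\ (forall y, Un_cv (fun k => P k y) (h y)) /\
    forall n y, Rabs (h y - P n y) <= q ^ n * c / (1 - q).
Proof.
  intros Hcont.
  assert (Hsmall := geometric_small q (c / (1 - q)) Hq).
  assert (Hcauchy : forall y, Cauchy_crit (fun k => P k y)).
  { intros y eps Heps. destruct (Hsmall eps Heps) as [M HM]. exists M.
    intros i j Hi Hj. unfold Rdist.
    destruct (Nat.le_ge_cases i j) as [Hij|Hji]; [rewrite Rabs_minus_sym |];
      (eapply Rle_lt_trans; [now apply geometric_cauchy_bound |]);
      unfold Rdiv in *; rewrite Rmult_assoc; now apply HM. }
  pose (h := fun y => proj1_sig (R_complete _ (Hcauchy y))).
  assert (Hlim : forall y, Un_cv (fun k => P k y) (h y))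
    by (intro y; unfold h; destruct (R_complete _ (Hcauchy y)); assumption).
  assert (Hrate : forall n y, Rabs (h y - P n y) <= q ^ n * c / (1 - q))
    by (intros n y; apply (limit_dist_le _ _ _ _ n (Hlim y));
        intros m Hm; now apply geometric_cauchy_bound).
  exists h. split; [| split; assumption].
  intro y. apply (CVU_continuity P h y (mkposreal 1 Rlt_0_1)).
  - intros eps Heps. destruct (Hsmall eps Heps) as [M HM]. exists M. intros n z Hn _.
    eapply Rle_lt_trans; [apply Hrate |]. unfold Rdiv in *. rewrite Rmult_assoc. now apply HM.
  - intros n z _. apply Hcont.
  - unfold Boule; simpl. rewrite Rminus_diag, Rabs_R0; lra.
Qed.

End GeometricLimit.

Lemma sum_single (F : nat -> R) (n k : nat) : (k <= n)%nat ->
  (forall j, (j <= n)%nat -> j <> k -> F j = 0) -> sum_f_R0 F n = F k.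
Proof.
  induction n as [|n IHn]; intros Hk H; simpl.
  - now replace k with 0%nat by lia.
  - destruct (Nat.eq_dec k (S n)) as [->|Hne].
    + rewrite sum_eq_R0; [lra |]. intros j Hj; apply H; lia.
    + rewrite IHn, (H (S n)); [ring | lia | lia | lia | intros; apply H; lia].
Qed.

Lemma alpha_max_spec (N : nat) (alpha : nat -> R) : alpha_ok N alpha ->
  forall k, (k <= N)%nat ->
  0 <= alpha_max alpha k < 1 /\ forall i, (1 <= i <= k)%nat -> Rabs (alpha i) <= alpha_max alpha k.
Proof.
  intros Ha k. induction k as [|k IHk]; intros Hk; simpl.
  - split; [lra | intros; lia].
  - destruct (IHk ltac:(lia)) as [[H0 H1] Hdom].
    assert (Hk1 : Rabs (alpha (S k)) < 1).
    { destruct (Ha (S k) ltac:(lia)). unfold Rabs; destruct Rcase_abs; lra. }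
    split; [unfold Rmax; destruct Rle_dec; lra |].
    intros i Hi. destruct (Nat.eq_dec i (S k)) as [->|Hne]; [apply Rmax_r |].
    eapply Rle_trans; [apply Hdom; lia | apply Rmax_l].
Qed.

Section SelfAffine.

Variables (N : nat) (x : nat -> R) (alpha : nat -> R).
Hypothesis Hpart : partition N x.
Hypothesis HN : (1 <= N)%nat.

Lemma partition_mono (i j : nat) : (i <= j <= N)%nat -> x i <= x j.
Proof.
  induction j as [|j IHj]; intros Hij.
  - replace i with 0%nat by lia; lra.
  - destruct (Nat.eq_dec i (S j)) as [->|Hne]; [lra |].
    apply Rle_trans with (x j); [apply IHj; lia | left; apply Hpart; lia].
Qed.

Lemma partition_span : x 0%nat < x N.
Proof. apply Rlt_le_trans with (x 1%nat); [apply Hpart; lia | apply partition_mono; lia]. Qed.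

Lemma segment_nondeg (j : nat) : (1 <= j <= N)%nat -> x (pred j) < x j.
Proof. intros Hj. destruct j as [|j]; [lia | apply Hpart; simpl; lia]. Qed.

Lemma segment_cover (y : R) :
  (exists i, (1 <= i <= N)%nat /\ x (pred i) <= y <= x i) \/ y <= x 0%nat \/ x N <= y.
Proof.
  destruct (Rle_dec y (x 0%nat)) as [|Hlo]; [now right; left |].
  destruct (Rle_dec (x N) y) as [|Hhi]; [now right; right |].
  left. assert (Hk : forall k, (1 <= k <= N)%nat -> y <= x k ->
                     exists i, (1 <= i <= k)%nat /\ x (pred i) <= y <= x i).
  { induction k as [|k IHk]; intros Hk Hyk; [lia |].
    destruct (Rle_dec y (x k)) as [Hle|Hgt].
    - destruct k as [|k]; [lra |].
      destruct (IHk ltac:(lia) Hle) as [i [Hi1 Hi2]]. exists i; split; [lia | exact Hi2].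
    - exists (S k); simpl; split; [lia | lra]. }
  destruct (Hk N ltac:(lia) ltac:(lra)) as [i [Hi Hy]]. exists i; split; [lia | exact Hy].
Qed.

Lemma Linv_mono (j : nat) (y y' : R) : (1 <= j <= N)%nat -> y <= y' ->
  Linv N x j y <= Linv N x j y'.
Proof.
  intros Hj Hyy. pose proof (segment_nondeg j Hj). pose proof partition_span.
  unfold Linv, Rdiv. apply Rplus_le_compat_l.
  apply Rmult_le_compat_r; [left; apply Rinv_0_lt_compat; lra |].
  apply Rmult_le_compat_r; lra.
Qed.

Lemma Linv_left (j : nat) : (1 <= j <= N)%nat -> Linv N x j (x (pred j)) = x 0%nat.
Proof. intros Hj. pose proof (segment_nondeg j Hj). unfold Linv. field. lra. Qed.

Lemma Linv_right (j : nat) : (1 <= j <= N)%nat -> Linv N x j (x j) = x N.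
Proof. intros Hj. pose proof (segment_nondeg j Hj). unfold Linv. field. lra. Qed.

Lemma Linv_in (j : nat) (y : R) : (1 <= j <= N)%nat -> x (pred j) <= y <= x j ->
  in_I (x 0%nat) (x N) (Linv N x j y).
Proof.
  intros Hj Hy. rewrite <- (Linv_left j Hj), <- (Linv_right j Hj).
  split; apply Linv_mono; tauto.
Qed.

Lemma Linv_continuity (j : nat) : continuity (Linv N x j).
Proof.
  unfold Linv, Rdiv. apply continuity_plus_fun; [apply continuity_cst |].
  apply continuity_mult_fun; [| apply continuity_cst].
  apply continuity_mult_fun; [| apply continuity_cst].
  apply continuity_minus_fun; [apply derivable_continuous, derivable_id | apply continuity_cst].
Qed.

(** * The self-affine operator *)

Definition vanishes_off (w : R -> R) : Prop :=
  forall y, y <= x 0%nat \/ x N <= y -> w y = 0.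

(* [(S w)(y) = alpha_i * w (L_i^{-1} y)] on [I_i].  Written as a sum over the
   pieces, it is defined on the whole line, and for [w] vanishing off [I] all
   but the term of the piece containing [y] vanish. *)
Definition selfaffine (w : R -> R) (y : R) : R :=
  sum_f_R0 (fun j => alpha (S j) * w (Linv N x (S j) y)) (pred N).

Lemma selfaffine_continuity (w : R -> R) : continuity w -> continuity (selfaffine w).
Proof.
  intros Hw. unfold selfaffine. generalize (pred N) as n.
  induction n as [|n IHn]; cbn [sum_f_R0];
    [| apply continuity_plus_fun; [exact IHn |]];
    (apply continuity_mult_fun; [apply continuity_cst |]);
    apply continuity_comp_fun; [apply Linv_continuity | exact Hw |
                             apply Linv_continuity | exact Hw].
Qed.

Lemma selfaffine_on_segment (w : R -> R) (i : nat) (y : R) : vanishes_off w ->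
  (1 <= i <= N)%nat -> x (pred i) <= y <= x i ->
  selfaffine w y = alpha i * w (Linv N x i y).
Proof.
  intros Hw Hi Hy. unfold selfaffine.
  rewrite (sum_single _ _ (pred i)); [now replace (S (pred i)) with i by lia | lia |].
  intros j Hj Hne. rewrite Hw; [ring |].
  destruct (Nat.lt_ge_cases (S j) i) as [Hlt|Hge].
  - right. rewrite <- (Linv_right (S j)) by lia. apply Linv_mono; [lia |].
    apply Rle_trans with (x (pred i)); [apply partition_mono; lia | apply Hy].
  - left. rewrite <- (Linv_left (S j)) by lia. apply Linv_mono; [lia |].
    apply Rle_trans with (x i); [apply Hy | apply partition_mono; simpl; lia].
Qed.

Lemma selfaffine_vanishes (w : R -> R) : vanishes_off w -> vanishes_off (selfaffine w).
Proof.
  intros Hw y Hy. unfold selfaffine. apply sum_eq_R0. intros j Hj.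
  rewrite Hw; [ring |]. destruct Hy as [Hy|Hy].
  - left. rewrite <- (Linv_left (S j)) by lia. apply Linv_mono; [lia |].
    apply Rle_trans with (x 0%nat); [exact Hy | apply partition_mono; lia].
  - right. rewrite <- (Linv_right (S j)) by lia. apply Linv_mono; [lia |].
    apply Rle_trans with (x N); [apply partition_mono; lia | exact Hy].
Qed.

Lemma selfaffine_minus (w w' : R -> R) (y : R) :
  selfaffine w y - selfaffine w' y = selfaffine (fun z => w z - w' z) y.
Proof.
  unfold selfaffine. rewrite <- minus_sum. apply sum_eq. intros j _. ring.
Qed.

Hypothesis Halpha : alpha_ok N alpha.

Lemma selfaffine_bound (w : R -> R) (B : R) : vanishes_off w ->
  (forall z, in_I (x 0%nat) (x N) z -> Rabs (w z) <= B) ->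
  forall y, Rabs (selfaffine w y) <= alpha_max alpha N * B.
Proof.
  intros Hw HB y.
  destruct (alpha_max_spec N alpha Halpha N (le_n N)) as [[Ha0 Ha1] Hdom].
  destruct (segment_cover y) as [[i [Hi Hy]] | Hout].
  - rewrite (selfaffine_on_segment w i y Hw Hi Hy), Rabs_mult.
    apply Rmult_le_compat; [apply Rabs_pos | apply Rabs_pos | now apply Hdom |].
    apply HB, Linv_in; assumption.
  - rewrite (selfaffine_vanishes w Hw y Hout), Rabs_R0.
    pose proof (HB (x 0%nat) ltac:(pose proof partition_span; unfold in_I; lra)).
    pose proof (Rabs_pos (w (x 0%nat))). nra.
Qed.

(** * Existence of the fractal perturbation *)

Section FixedPoint.

Variables (u : R -> R) (V : R).
Hypothesis Hu : continuity u.
Hypothesis Hu0 : vanishes_off u.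
Hypothesis HuV : forall z, in_I (x 0%nat) (x N) z -> Rabs (u z) <= V.

Definition picard (k : nat) : R -> R :=
  Nat.iter k (fun w => selfaffine (fun z => w z + u z)) (fun _ => 0).

Lemma picard_regular (k : nat) : continuity (picard k) /\ vanishes_off (picard k).
Proof.
  induction k as [|k [IHc IHv]].
  - split; [apply continuity_cst | intros y _; reflexivity].
  - split; [apply selfaffine_continuity, continuity_plus_fun; assumption |].
    apply selfaffine_vanishes. intros y Hy. rewrite IHv, Hu0 by assumption. ring.
Qed.

Lemma picard_shift_vanishes (k : nat) : vanishes_off (fun z => picard k z + u z).
Proof. intros y Hy. rewrite (proj2 (picard_regular k)), Hu0 by assumption. ring. Qed.

Lemma picard_increment (k : nat) (y : R) :
  Rabs (picard (S k) y - picard k y) <= alpha_max alpha N ^ k * (alpha_max alpha N * V).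
Proof.
  revert y. induction k as [|k IHk]; intro y.
  - change (picard 1%nat y - picard 0%nat y) with (selfaffine (fun z => 0 + u z) y - 0).
    rewrite Rminus_0_r, pow_O, Rmult_1_l.
    apply selfaffine_bound; [apply (picard_shift_vanishes 0) |].
    intros z Hz. rewrite Rplus_0_l. auto.
  - change (picard (S (S k)) y - picard (S k) y) with
      (selfaffine (fun z => picard (S k) z + u z) y - selfaffine (fun z => picard k z + u z) y).
    rewrite selfaffine_minus, <- tech_pow_Rmult, Rmult_assoc.
    apply selfaffine_bound.
    + intros z Hz. rewrite (picard_shift_vanishes (S k) z Hz), (picard_shift_vanishes k z Hz).
      ring.
    + intros z _. replace (picard (S k) z + u z - (picard k z + u z))
        with (picard (S k) z - picard k z) by ring.
      apply IHk.
Qed.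

Lemma selfaffine_fixed_point :
  exists h, continuity h /\
    (forall y, Rabs (h y) <= alpha_max alpha N * V / (1 - alpha_max alpha N)) /\
    (forall i y, (1 <= i <= N)%nat -> x (pred i) <= y <= x i ->
       h y = alpha i * (h (Linv N x i y) + u (Linv N x i y))).
Proof.
  destruct (alpha_max_spec N alpha Halpha N (le_n N)) as [Ha _].
  set (a := alpha_max alpha N) in *.
  destruct (geometric_uniform_limit picard a (a * V) Ha picard_increment
              (fun k => proj1 (picard_regular k))) as [h [Hh [Hlim Hrate]]].
  exists h. split; [exact Hh | split].
  - intro y. replace (h y) with (h y - picard 0%nat y) by (cbn; ring).
    replace (a * V / (1 - a)) with (a ^ 0 * (a * V) / (1 - a)) by (simpl; field; lra).
    apply Hrate.
  - intros i y Hi Hy. set (z := Linv N x i y).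
    apply (UL_sequence (fun k => picard (S k) y)).
    + apply (Un_cv_ext (fun k => picard (k + 1)%nat y)); [intro k; now rewrite Nat.add_1_r |].
      exact (CV_shift' (fun k => picard k y) 1 (h y) (Hlim y)).
    + apply (Un_cv_ext (fun k => alpha i * (picard k z + u z))).
      { intro k. symmetry. apply (selfaffine_on_segment _ i y (picard_shift_vanishes k) Hi Hy). }
      apply (continuity_seq (fun w => alpha i * (w + u z))); [| apply Hlim].
      apply continuity_mult_fun; [apply continuity_cst |].
      apply continuity_plus_fun; [apply derivable_continuous, derivable_id | apply continuity_cst].
Qed.

End FixedPoint.

End SelfAffine.

Lemma opnorm_IdmL_ge0 (a b : R) (L : (R -> R) -> R -> R) : 0 <= opnorm_IdmL a b L.
Proof. apply Rsup_ge0. intros y [g [_ [_ ->]]]. apply supnorm_ge0. Qed.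

Section AdmissibleOperator.

Variables (a b : R) (L : (R -> R) -> R -> R).
Hypothesis Hab : a <= b.
Hypothesis HL : admissible_L a b L.

(* The set defining [||Id - L||] is bounded, by [1 + K] where [K] bounds [L]. *)
Lemma opnorm_set_bounded : bound (fun y => exists g, cont_on a b g /\
  supnorm a b g <= 1 /\ y = supnorm a b (fun t => g t - L g t)).
Proof.
  destruct HL as [HLc [_ [_ [_ [[K HK] _]]]]].
  exists (1 + Rabs K). intros y [g [Hg [Hg1 ->]]].
  apply supnorm_lub; [exact Hab |]. intros t Ht.
  pose proof (Rabs_triang (g t) (- L g t)) as Htri. rewrite Rabs_Ropp in Htri.
  pose proof (supnorm_ub a b t g Hab Hg Ht).
  pose proof (supnorm_ub a b t (L g) Hab (HLc g Hg) Ht).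
  pose proof (HK g Hg). pose proof (supnorm_ge0 a b g).
  assert (K * supnorm a b g <= Rabs K).
  { apply Rle_trans with (Rabs K * supnorm a b g);
      [apply Rmult_le_compat_r; [assumption | apply Rle_abs] | pose proof (Rabs_pos K); nra]. }
  unfold Rminus. lra.
Qed.

(* By linearity and locality, [L] kills functions vanishing on [[a,b]]. *)
Lemma admissible_kills_zero (r : R -> R) : cont_on a b r ->
  (forall t, in_I a b t -> r t = 0) -> forall t, in_I a b t -> L r t = 0.
Proof.
  destruct HL as [_ [HLloc [_ [HLscal _]]]]. intros Hr Hz t Ht.
  rewrite (HLloc r (fun s => 0 * r s) Hr (cont_on_scal a b 0 r Hab Hr)); [| | exact Ht].
  - rewrite HLscal by assumption. ring.
  - intros s Hs. rewrite Hz by assumption. ring.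
Qed.

Lemma opnorm_IdmL_bound (r : R -> R) : cont_on a b r ->
  supnorm a b (fun t => r t - L r t) <= opnorm_IdmL a b L * supnorm a b r.
Proof.
  intros Hr. pose proof HL as [HLc [_ [_ [HLscal _]]]].
  pose proof (supnorm_ge0 a b r) as Hnr. set (nr := supnorm a b r) in *.
  destruct (Rle_lt_or_eq_dec _ _ Hnr) as [Hpos|Hzero].
  - set (g := fun s => / nr * r s).
    assert (Hg : cont_on a b g) by now apply cont_on_scal.
    assert (Hinv : 0 < / nr) by now apply Rinv_0_lt_compat.
    assert (Hg1 : supnorm a b g <= 1).
    { replace 1 with (/ nr * nr) by (field; lra).
      apply supnorm_le_scal; [exact Hab | lra | exact Hr |].
      intros t _. unfold g. rewrite Rabs_mult, (Rabs_right (/ nr)); lra. }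
    assert (Hop : supnorm a b (fun t => g t - L g t) <= opnorm_IdmL a b L)
      by (apply Rsup_ub; [apply opnorm_set_bounded | exists g; auto]).
    rewrite Rmult_comm. apply Rle_trans with (nr * supnorm a b (fun t => g t - L g t));
      [| apply Rmult_le_compat_l; lra].
    apply supnorm_le_scal; [exact Hab | lra | apply cont_on_minus; auto |].
    intros t Ht. unfold g. rewrite HLscal by assumption.
    replace (r t - L r t) with (nr * (/ nr * r t - / nr * L r t)) by (field; lra).
    rewrite Rabs_mult, (Rabs_right nr); lra.
  - assert (Hz : forall t, in_I a b t -> r t = 0).
    { intros t Ht. pose proof (supnorm_ub a b t r Hab Hr Ht) as Hrt. fold nr in Hrt.
      destruct (Req_dec (r t) 0) as [|Hne]; [assumption |].
      pose proof (Rabs_pos_lt _ Hne). lra. }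
    rewrite <- Hzero, Rmult_0_r. apply supnorm_lub; [exact Hab |]. intros t Ht.
    rewrite Hz, (admissible_kills_zero r Hr Hz t Ht) by assumption.
    rewrite Rminus_0_r, Rabs_R0. lra.
Qed.

End AdmissibleOperator.

(* It is [f + h] with [h]
   the fixed point for [u = f - L f], extended by its (zero) endpoint values. *)
Lemma fractal_perturbation (N : nat) (x alpha : nat -> R) (L : (R -> R) -> R -> R)
    (r : R -> R) :
  partition N x -> (1 <= N)%nat -> alpha_ok N alpha -> admissible_L (x 0%nat) (x N) L ->
  cont_on (x 0%nat) (x N) r ->
  exists g, is_fractal N x alpha r (L r) g /\
    forall t, in_I (x 0%nat) (x N) t -> Rabs (g t - r t) <=
      alpha_max alpha N * supnorm (x 0%nat) (x N) (fun s => r s - L r s)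
      / (1 - alpha_max alpha N).
Proof.
  intros Hp HN Ha HL Hr.
  pose proof (partition_span N x Hp HN) as Hspan.
  set (a := x 0%nat) in *. set (b := x N) in *.
  assert (Hab : a <= b) by lra.
  pose proof HL as [HLc [_ [_ [_ [_ HLend]]]]].
  set (v := fun t => r t - L r t).
  assert (Hv : cont_on a b v) by (apply cont_on_minus; auto).
  set (u := fun t => v (clamp a b t)).
  assert (Hu : continuity u) by now apply cont_on_iff_clamp.
  assert (Hu0 : vanishes_off N x u).
  { destruct (HLend r Hr) as [Ea Eb]. intros y [Hy|Hy]; unfold u, v.
    - rewrite clamp_left by assumption. rewrite Ea. ring.
    - rewrite clamp_right by assumption. rewrite Eb. ring. }
  assert (HuV : forall z, in_I a b z -> Rabs (u z) <= supnorm a b v).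
  { intros z Hz. unfold u. rewrite clamp_id by assumption. now apply supnorm_ub. }
  destruct (selfaffine_fixed_point N x alpha Hp HN Ha u _ Hu Hu0 HuV)
    as [h [Hh [HhV Hhfix]]].
  exists (fun t => r t + h t). split; [split |].
  - apply cont_on_plus; [exact Hab | exact Hr | now apply continuity_cont_on].
  - intros i Hi y Hy. rewrite (Hhfix i y Hi Hy). unfold u.
    rewrite clamp_id by now apply Linv_in. unfold v. ring.
  - intros t _. replace (r t + h t - r t) with (h t) by ring. apply HhV.
Qed.

Lemma fractal_rational_approximation (N : nat) (x alpha : nat -> R)
    (L : (R -> R) -> R -> R) (f r : R -> R) (m n : nat) :
  partition N x -> (1 <= N)%nat -> alpha_ok N alpha -> admissible_L (x 0%nat) (x N) L ->
  cont_on (x 0%nat) (x N) f -> Rat (x 0%nat) (x N) m n r ->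
  exists g, Rat_alpha N x alpha L m n g /\
    supnorm (x 0%nat) (x N) (fun t => f t - g t)
    <= supnorm (x 0%nat) (x N) (fun t => f t - r t)
       + alpha_max alpha N / (1 - alpha_max alpha N) * opnorm_IdmL (x 0%nat) (x N) L
         * (supnorm (x 0%nat) (x N) (fun t => f t - r t) + supnorm (x 0%nat) (x N) f).
Proof.
  intros Hp HN Ha HL Hf Hrat.
  pose proof (partition_span N x Hp HN) as Hspan.
  destruct (alpha_max_spec N alpha Ha N (le_n N)) as [[Ha0 Ha1] _].
  pose proof (Rat_cont_on _ _ _ _ _ Hrat) as Hr.
  destruct (fractal_perturbation N x alpha L r Hp HN Ha HL Hr) as [g [Hg Hgr]].
  exists g. split; [exists r; split; assumption |].
  set (a := x 0%nat) in *. set (b := x N) in *. set (am := alpha_max alpha N) in *.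
  assert (Hab : a <= b) by lra.
  set (d := supnorm a b (fun t => f t - r t)).
  assert (Hfr : cont_on a b (fun t => f t - r t)) by now apply cont_on_minus.
  assert (Hrnorm : supnorm a b r <= d + supnorm a b f).
  { apply supnorm_lub; [exact Hab |]. intros t Ht.
    pose proof (supnorm_ub a b t _ Hab Hfr Ht) as Hfrt. fold d in Hfrt.
    pose proof (supnorm_ub a b t f Hab Hf Ht).
    pose proof (Rabs_triang (- (f t - r t)) (f t)) as Htri.
    rewrite Rabs_Ropp in Htri. replace (- (f t - r t) + f t) with (r t) in Htri by ring.
    lra. }
  assert (Hpert : am * supnorm a b (fun s => r s - L r s) / (1 - am)
                  <= am / (1 - am) * opnorm_IdmL a b L * (d + supnorm a b f)).
  { assert (Hc : 0 <= am / (1 - am))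
      by (unfold Rdiv; apply Rmult_le_pos; [lra | left; apply Rinv_0_lt_compat; lra]).
    replace (am * supnorm a b (fun s => r s - L r s) / (1 - am))
      with (am / (1 - am) * supnorm a b (fun s => r s - L r s)) by (field; lra).
    rewrite Rmult_assoc. apply Rmult_le_compat_l; [exact Hc |].
    eapply Rle_trans; [now apply opnorm_IdmL_bound |].
    apply Rmult_le_compat_l; [apply opnorm_IdmL_ge0 | exact Hrnorm]. }
  apply supnorm_lub; [exact Hab |]. intros t Ht.
  pose proof (supnorm_ub a b t _ Hab Hfr Ht) as Hfrt. fold d in Hfrt.
  pose proof (Hgr t Ht).
  pose proof (Rabs_triang (f t - r t) (- (g t - r t))) as Htri. rewrite Rabs_Ropp in Htri.
  replace (f t - r t + - (g t - r t)) with (f t - g t) in Htri by ring.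
  lra.
Qed.

Lemma Rinf_affine_transfer (Ea Er : R -> Prop) (c e : R) : 0 <= c -> (exists d, Er d) ->
  (forall d, Er d -> Rinf Ea <= d + c * (d + e)) ->
  Rinf Ea <= Rinf Er + c * (Rinf Er + e).
Proof.
  intros Hc Hne Hall.
  assert (Hlow : (Rinf Ea - c * e) / (1 + c) <= Rinf Er).
  { apply Rinf_glb; [exact Hne |]. intros d Hd. specialize (Hall d Hd).
    apply (Rmult_le_reg_r (1 + c)); [lra |].
    unfold Rdiv. rewrite Rmult_assoc, Rinv_l by lra. lra. }
  apply (Rmult_le_compat_r (1 + c)) in Hlow; [| lra].
  unfold Rdiv in Hlow. rewrite Rmult_assoc, Rinv_l, Rmult_1_r in Hlow by lra.
  lra.
Qed.

Lemma is_poly_const (k : nat) (c : R) : is_poly k (fun _ => c).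
Proof.
  exists (fun j => match j with O => c | S _ => 0 end). intro t.
  induction k as [|k IHk]; simpl; [ring | rewrite <- IHk; ring].
Qed.

Lemma Rat_zero (a b : R) (m n : nat) : Rat a b m n (fun _ => 0).
Proof.
  exists (fun _ => 0), (fun _ => 1).
  split; [apply is_poly_const | split; [apply is_poly_const |]].
  split; intros; [lra | field].
Qed.

Theorem mainTheorem8 (N : nat) (x : nat -> R) (alpha : nat -> R)
    (L : (R -> R) -> (R -> R)) (f : R -> R) (m n : nat) :
  (2 <= N)%nat ->
  partition N x ->
  alpha_ok N alpha ->
  admissible_L (x 0%nat) (x N) L ->
  cont_on (x 0%nat) (x N) f ->
  distS (x 0%nat) (x N) f (Rat_alpha N x alpha L m n)
  <= distS (x 0%nat) (x N) f (Rat (x 0%nat) (x N) m n)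
     + alpha_max alpha N / (1 - alpha_max alpha N)
       * opnorm_IdmL (x 0%nat) (x N) L
       * (distS (x 0%nat) (x N) f (Rat (x 0%nat) (x N) m n)
          + supnorm (x 0%nat) (x N) f).
Proof.
  intros HN Hp Ha HL Hf.
  assert (HN1 : (1 <= N)%nat) by lia.
  destruct (alpha_max_spec N alpha Ha N (le_n N)) as [[Ha0 Ha1] _].
  unfold distS. apply Rinf_affine_transfer.
  - apply Rmult_le_pos; [| apply opnorm_IdmL_ge0].
    unfold Rdiv. apply Rmult_le_pos; [lra | left; apply Rinv_0_lt_compat; lra].
  - exists (supnorm (x 0%nat) (x N) (fun t => f t - 0)), (fun _ => 0).
    split; [apply Rat_zero | reflexivity].
  - intros d [r [Hr ->]].
    destruct (fractal_rational_approximation N x alpha L f r m n Hp HN1 Ha HL Hf Hr)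
      as [g [Hg Hfg]].
    eapply Rle_trans; [| exact Hfg].
    apply (Rinf_lb _ 0); [intros z [s [_ ->]]; apply supnorm_ge0 | exists g; auto].
Qed.
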